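(* The following two statements are equivalent: (1) For all $n\ge1$, every infinite sequence of positive integers $x_1<x_2<\cdots$ with $x_{i+1}-x_i\le n$ for all $i$ contains a double 3-term arithmetic progression. (2) For all $n\ge1$ and all $m\in\mathbb{N}$, every infinite sequence of positive integers $x_1<x_2<\cdots$ with $x_{i+1}-x_i\le n$ for all $i$ contains a double 3-term arithmetic progression $x_i,x_j,x_k$ (with $i<j<k$) such that $j-i=k-j\ge m$.
   Context: An increasing sequence of positive integers $x_1<x_2<\cdots$ contains a double 3-term arithmetic progression $x_i,x_j,x_k$ if $i<j<k$, $i+k=2j$ and $x_i+x_k=2x_j$. *)

(* Stdlib-free: plain nat, Prop connectives. Sequences are indexed from 0
   (x 0 = x_1); this index shift does not affect any statement. *)

Definition admissible (n : nat) (x : nat -> nat) : Prop :=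
  (forall i, 0 < x i) /\ (forall i, x i < x (S i)) /\ (forall i, x (S i) - x i <= n).

Definition double3AP (x : nat -> nat) (i j k : nat) : Prop :=
  i < j /\ j < k /\ i + k = 2 * j /\ x i + x k = 2 * x j.

Definition has_double3AP (x : nat -> nat) : Prop :=
  exists i j k, double3AP x i j k.

From Stdlib Require Import Arith Lia.

(* Statement (2) specialised to m = 0 is statement (1), so
   only (1) -> (2) needs an argument.  Given m, sample the sequence with
   stride s = m + 1, i.e. pass to y_t = x_(s t).  The sampled sequence is
   again strictly increasing and positive, and its gaps are at most s n, so
   by (1) (applied with gap bound s n) it contains a double 3-term AP
   y_i, y_j, y_k.  Scaling the indices back gives the double 3-term AP
   x_(s i), x_(s j), x_(s k) of the original sequence, whose two index
   steps are equal (because i + k = 2 j) and at least s > m. *)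

Lemma admissible_span (n : nat) (x : nat -> nat) :
  admissible n x -> forall a d, x (a + d) - x a <= d * n.
Proof.
  intros [_ [Hinc Hgap]] a d. induction d as [|d IH].
  - rewrite Nat.add_0_r. lia.
  - replace (a + S d) with (S (a + d)) by lia.
    specialize (Hinc (a + d)). specialize (Hgap (a + d)). lia.
Qed.

Lemma admissible_lt (n : nat) (x : nat -> nat) :
  admissible n x -> forall a b, a < b -> x a < x b.
Proof.
  intros [_ [Hinc _]] a b Hab. induction Hab as [|b _ IH].
  - apply Hinc.
  - specialize (Hinc b). lia.
Qed.

Definition sample (s : nat) (x : nat -> nat) : nat -> nat :=
  fun t => x (s * t).

Lemma admissible_sample (s n : nat) (x : nat -> nat) :
  0 < s -> admissible n x -> admissible (s * n) (sample s x).
Proof.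
  intros Hs Hx. pose proof Hx as [Hpos _].
  unfold sample. split; [|split]; intro t.
  - apply Hpos.
  - apply (admissible_lt n x Hx). nia.
  - replace (s * S t) with (s * t + s) by lia.
    rewrite (Nat.mul_comm s n).
    pose proof (admissible_span n x Hx (s * t) s). lia.
Qed.

Lemma double3AP_sample (s : nat) (x : nat -> nat) (i j k : nat) :
  0 < s -> double3AP (sample s x) i j k -> double3AP x (s * i) (s * j) (s * k).
Proof.
  unfold double3AP, sample. intros Hs [Hij [Hjk [Hidx Hval]]].
  repeat split; nia.
Qed.

Lemma double3AP_equal_steps (x : nat -> nat) (i j k : nat) :
  double3AP x i j k -> j - i = k - j.
Proof. unfold double3AP. lia. Qed.

Lemma double3AP_sample_step (s : nat) (x : nat -> nat) (i j k : nat) :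
  double3AP (sample s x) i j k -> s <= s * j - s * i.
Proof. unfold double3AP. intros [Hij _]. nia. Qed.

Theorem theorem5 :
  (forall n : nat, 1 <= n -> forall x : nat -> nat,
      admissible n x -> has_double3AP x)
  <->
  (forall n : nat, 1 <= n -> forall m : nat, forall x : nat -> nat,
      admissible n x ->
      exists i j k, double3AP x i j k /\ j - i = k - j /\ m <= j - i).
Proof.
  split.
  - intros Hall n Hn m x Hx.
    assert (Hy : admissible (S m * n) (sample (S m) x))
      by (apply admissible_sample; [lia | exact Hx]).
    destruct (Hall (S m * n) ltac:(lia) _ Hy) as [i [j [k Hap]]].
    pose proof (double3AP_sample (S m) x i j k ltac:(lia) Hap) as Hap'.
    exists (S m * i), (S m * j), (S m * k). split; [exact Hap'|split].
    + exact (double3AP_equal_steps x _ _ _ Hap').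
    + pose proof (double3AP_sample_step (S m) x i j k Hap). lia.
  -
    intros Hall n Hn x Hx.
    destruct (Hall n Hn 0 x Hx) as [i [j [k [Hap _]]]].
    exists i, j, k. exact Hap.
Qed.
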